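(* Let $\mathcal{T}$ be a pattern set on an image $I$, let $I_0\subseteq I$ be a subimage, and let $\mathcal{M}=\{T\cap I_0\mid T\in\mathcal{T}\}$ (assumed to be a pattern set on $I_0$). Then for $L\in\{\mathrm{OR},\mathrm{SUM},\mathrm{OR2},\mathrm{SUM2}\}$, $L(\mathcal{M})\leqslant L(\mathcal{T})$.
   Context: Image: a finite set $I$ of pixel variables; a subimage is a subset of $I$. A pattern is a nonempty subset of the image; a pattern set $\mathcal{T}=\{T_k\}_{k=1}^m$ is a nonempty set of $m$ distinct patterns; computing it means computing simultaneously $y_k=\sum_{p\in T_k}p$ for a commutative semigroup operation. A circuit is a directed acyclic graph with one input node of fanin zero per pixel and $m$ output nodes of fanout zero; each node of nonzero fanin (gate) may have any positive number of incoming edges and computes the semigroup sum of its in-neighbours. Size = number of edges. A circuit computes $\mathcal{T}$ if for all input values each output $y_k$ equals $\sum_{p\in T_k}p$. $\mathrm{OR}(\mathcal{T})$ (resp. $\mathrm{SUM}(\mathcal{T})$) is the minimal size of a circuit computing $\mathcal{T}$ over $(\{0,1\},\vee)$ (resp. $(\mathbb{N},+)$). $\mathrm{OR2}(\mathcal{T})$ (resp. $\mathrm{SUM2}(\mathcal{T})$) is the minimal number of gates of a circuit computing $\mathcal{T}$ over $(\{0,1\},\vee)$ (resp. $(\mathbb{N},+)$) in which every node has fanin at most $2$. *)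

From Stdlib Require Import ClassicalEpsilon.
From mathcomp Require Import all_boot.

Set Implicit Arguments.
Unset Strict Implicit.
Unset Printing Implicit Defensive.

Section Circuits.
Variable X : finType. (* pixel variables; an image is a {set X} *)

Definition pattern_set (I : {set X}) (Ts : {set {set X}}) : Prop :=
  Ts != set0 /\ (forall T, T \in Ts -> T != set0 /\ T \subset I).

(* A circuit: the input nodes are the pixels; the gates are 'I_ng, numbered
   in a topological order of the DAG.  Gate j has incoming edges from the
   input nodes in [pin j] and from the gates in [gin j]; [out T] is the
   output node (a gate) for pattern T. *)
Record circuit := Circuit {
  ng  : nat;
  pin : 'I_ng -> {set X};
  gin : 'I_ng -> {set 'I_ng};
  out : {set X} -> 'I_ng
}.
Arguments pin c j : clear implicits.
Arguments gin c j : clear implicits.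
Arguments out c T : clear implicits.

Definition circuit_wf (I : {set X}) (Ts : {set {set X}}) (C : circuit) : Prop :=
  [/\ (forall j, pin C j \subset I),
      (forall j i, i \in gin C j -> (i < j)%N),
      (forall j, (pin C j != set0) || (gin C j != set0)),
      {in Ts &, injective (out C)}
    & (forall T j, T \in Ts -> out C T \notin gin C j)].

(* Value of gate j under input x, for a commutative monoid law op
   (fuel n; fuel [ng C] suffices by acyclicity). *)
Fixpoint gval (R : Type) (idx : R) (op : Monoid.com_law idx) (C : circuit)
    (x : X -> R) (n : nat) (j : 'I_(ng C)) : R :=
  match n with
  | 0 => idx
  | n'.+1 => op (\big[op/idx]_(p in pin C j) x p)
                (\big[op/idx]_(i in gin C j) @gval R idx op C x n' i)
  end.

Definition computes (R : Type) (idx : R) (op : Monoid.com_law idx)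
    (I : {set X}) (Ts : {set {set X}}) (C : circuit) : Prop :=
  circuit_wf I Ts C /\
  forall (x : X -> R) T, T \in Ts ->
    @gval R idx op C x (ng C) (out C T) = \big[op/idx]_(p in T) x p.

Definition csize (C : circuit) : nat :=
  \sum_(j < ng C) (#|pin C j| + #|gin C j|).

Definition fanin2 (C : circuit) : Prop :=
  forall j, (#|pin C j| + #|gin C j| <= 2)%N.

Inductive measure := OR | SUM | OR2 | SUM2.

Definition achievable (L : measure) (I : {set X}) (Ts : {set {set X}}) (k : nat) : Prop :=
  exists C : circuit,
    match L with
    | OR   => computes orb I Ts C /\ csize C = k
    | SUM  => computes addn I Ts C /\ csize C = k
    | OR2  => computes orb I Ts C /\ fanin2 C /\ ng C = k
    | SUM2 => computes addn I Ts C /\ fanin2 C /\ ng C = k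
    end.

(* The least natural number satisfying P (defaults to 0 if none). *)
Definition nat_min (P : nat -> Prop) : nat :=
  epsilon (inhabits 0%N) (fun n => P n /\ forall m, P m -> (n <= m)%N).

Definition cost (L : measure) (I : {set X}) (Ts : {set {set X}}) : nat :=
  nat_min (achievable L I Ts).

End Circuits.

From Stdlib Require Import ClassicalEpsilon Classical Wf_nat.
From mathcomp Require Import all_boot zify.

Set Implicit Arguments.
Unset Strict Implicit.
Unset Printing Implicit Defensive.

(* Feed a circuit for Ts with inputs that vanish outside I0.  A gate whose
   value on the indicator of I0 is false (a dead gate) then computes the
   neutral element, so the edges leaving dead gates and the edges from pixels
   outside I0 can be deleted, and each dead gate is rewired to a single pixel
   of I0 to keep its fanin positive.  As every T :&: I0 is nonempty, no output
   is dead, so the result computes [set T :&: I0 | T in Ts] with no more edges,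
   the same gates and no larger fanins.  A cost is a minimum, which is junk
   when no circuit exists, so one also needs some circuit for Ts: one chain of
   fanin-2 gates per set of pixels. *)

Lemma nat_minP (P : nat -> Prop) k : P k ->
  P (nat_min P) /\ forall m, P m -> (nat_min P <= m)%N.
Proof.
move=> Pk; apply: (epsilon_spec (inhabits 0) (fun n => P n /\ forall m, P m -> (n <= m)%N)).
have [n [[Pn n_min] _]] :=
  dec_inh_nat_subset_has_unique_least_element P (fun n => classic (P n)) (ex_intro P k Pk).
by exists n; split=> // m /n_min /leP.
Qed.

Lemma leq_cost (X : finType) L (I I' : {set X}) (Ts Ts' : {set {set X}}) :
  (exists k, achievable L I Ts k) ->
  (forall k, achievable L I Ts k -> exists2 k', achievable L I' Ts' k' & (k' <= k)%N) ->
  (cost L I' Ts' <= cost L I Ts)%N.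
Proof.
move=> [k Ak] mono; have [Amin _] := nat_minP Ak.
have [k' A'k' le_k'k] := mono _ Amin.
have [_ min'] := nat_minP A'k'.
exact: leq_trans (min' _ A'k') le_k'k.
Qed.

Definition acyclic (X : finType) (C : circuit X) : Prop :=
  forall j i : 'I_(ng C), i \in gin j -> (i < j)%N.

Lemma gval_fuel (X : finType) (R : Type) (idx : R) (op : Monoid.com_law idx)
    (C : circuit X) (x : X -> R) :
    acyclic C -> forall n m (j : 'I_(ng C)), (j < n)%N -> (j < m)%N ->
  gval op x n j = gval op x m j.
Proof.
move=> C_acyclic; elim=> [|n IH] [|m] j //= jn jm.
congr (op _ _); apply: eq_bigr => i /C_acyclic ij; apply: IH; lia.
Qed.

Section Restriction.
Variables (X : finType) (I0 : {set X}) (p0 : X) (C : circuit X).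
Hypothesis C_acyclic : acyclic C.

Definition live (j : 'I_(ng C)) : bool := gval orb (fun p => p \in I0) (ng C) j.

Definition restrict_pin (j : 'I_(ng C)) := if live j then pin j :&: I0 else [set p0].
Definition restrict_gin (j : 'I_(ng C)) :=
  if live j then gin j :&: [set i | live i] else set0.
Definition restrict_circuit (o : {set X} -> 'I_(ng C)) : circuit X :=
  Circuit restrict_pin restrict_gin o.

Lemma live_fuel n (j : 'I_(ng C)) :
  (j < n)%N -> live j = gval orb (fun p => p \in I0) n j.
Proof. exact: gval_fuel. Qed.

Lemma live_fanin (j : 'I_(ng C)) :
  live j -> (pin j :&: I0 != set0) || (restrict_gin j != set0).
Proof.
move=> lj; rewrite /restrict_gin lj; move: lj.
rewrite (live_fuel (ltnSn j)) /= !big_orE.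
case/orP => [/exists_inP [p pj pI0] | /exists_inP [i ij li]]; apply/orP.
  by left; apply/set0Pn; exists p; rewrite inE pj.
by right; apply/set0Pn; exists i; rewrite !inE ij (live_fuel (C_acyclic ij)).
Qed.

Variables (R : Type) (idx : R) (op : Monoid.com_law idx) (x : X -> R).

Definition mask p := if p \in I0 then x p else idx.

Lemma big_mask (T : {set X}) :
  \big[op/idx]_(p in T) mask p = \big[op/idx]_(p in T :&: I0) x p.
Proof.
rewrite (big_setID I0) [X in op _ X]big1 ?Monoid.mulm1 => [|p].
  by apply: eq_bigr => p /setIP [_ pI0]; rewrite /mask pI0.
by rewrite inE /mask => /andP [/negPf -> _].
Qed.

Lemma gval_mask_dead n (j : 'I_(ng C)) :
  ~~ gval orb (fun p => p \in I0) n j -> gval op mask n j = idx.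
Proof.
elim: n j => [//|n IH] j /=; rewrite !big_orE negb_or.
case/andP => /exists_inP nopix /exists_inP nolive.
rewrite big1 => [|p pj]; last by rewrite /mask; case: ifP => // pI0; case: nopix; exists p.
rewrite big1 ?Monoid.mulm1 // => i ij.
by apply: IH; apply/negP => li; apply: nolive; exists i.
Qed.

Lemma restrict_gval o n (j : 'I_(ng C)) : (j < n)%N -> live j ->
  @gval X R idx op (restrict_circuit o) x n j = gval op mask n j.
Proof.
elim: n j => [//|n IH] j /= jn lj.
rewrite /restrict_pin /restrict_gin lj -big_mask.
rewrite [X in _ = op _ X](big_setID [set i | live i]) /=.
rewrite [X in _ = op _ (op _ X)]big1 ?Monoid.mulm1 => [|i /setDP [ij]]; last first.
  have i_n : (i < n)%N by have := C_acyclic ij; lia.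
  by rewrite inE (live_fuel i_n); apply: gval_mask_dead.
congr (op _ _); apply: eq_bigr => i /setIP [ij]; rewrite inE => li.
by apply: IH => //; have := C_acyclic ij; lia.
Qed.

End Restriction.

Definition nonvanishing (R : Type) (idx : R) (op : Monoid.com_law idx)
    (X : finType) (x : X -> R) : Prop :=
  forall U : {set X}, U != set0 -> \big[op/idx]_(p in U) x p <> idx.

Lemma nonvanishing_orb (X : finType) : nonvanishing orb (fun _ : X => true).
Proof. by move=> U /set0Pn [p Up]; rewrite (bigD1 p). Qed.

Lemma nonvanishing_addn (X : finType) : nonvanishing addn (fun _ : X => 1).
Proof. by move=> U /set0Pn [p Up]; rewrite (bigD1 p). Qed.

Section RestrictedCircuit.
Variables (X : finType) (I I0 : {set X}) (Ts : {set {set X}}) (p0 : X) (C : circuit X).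
Hypothesis p0I0 : p0 \in I0.

Definition restrict_out (U : {set X}) : 'I_(ng C) :=
  if [pick T in Ts | T :&: I0 == U] is Some T then out C T else out C U.

Definition restriction : circuit X := restrict_circuit I0 p0 restrict_out.

Lemma restrict_outP U : U \in [set T :&: I0 | T in Ts] ->
  exists2 T, T \in Ts & T :&: I0 = U /\ restrict_out U = out C T.
Proof.
case/imsetP => T0 T0Ts ->; rewrite /restrict_out; case: pickP => [T /andP [TTs /eqP <-]|].
  by exists T.
by move/(_ T0); rewrite T0Ts eqxx.
Qed.

Lemma restrict_wf :
  circuit_wf I Ts C -> circuit_wf I0 [set T :&: I0 | T in Ts] restriction.
Proof.
case=> _ C_acyclic _ out_inj out_fanout; split=> [j|j i|j|U V UM VM|U j UM] /=.
- rewrite /restrict_pin; case: ifP => _; [exact: subsetIr | by rewrite sub1set].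
- by rewrite /restrict_gin; case: ifP => _; [case/setIP => /C_acyclic | rewrite inE].
- rewrite /restrict_pin; case: ifPn => lj; first exact: live_fanin.
  by apply/orP; left; apply/set0Pn; exists p0; rewrite inE.
- have [T TTs [<- ->]] := restrict_outP UM; have [T' T'Ts [<- ->]] := restrict_outP VM.
  by move/(out_inj _ _ TTs T'Ts) ->.
- have [T TTs [_ ->]] := restrict_outP UM; rewrite /restrict_gin.
  by case: ifP => _; rewrite inE // negb_and out_fanout.
Qed.

Lemma restrict_csize : circuit_wf I Ts C -> (csize restriction <= csize C)%N.
Proof.
case=> _ _ fanin_pos _ _; apply: leq_sum => j _ /=.
rewrite /restrict_pin /restrict_gin; case: ifP => _.
  by apply: leq_add; apply/subset_leq_card/subsetIl.
by rewrite cards1 cards0 addn0 addn_gt0 !card_gt0.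
Qed.

Lemma restrict_fanin2 : fanin2 C -> fanin2 restriction.
Proof.
move=> C_fanin2 j /=; rewrite /restrict_pin /restrict_gin.
case: ifP => _; last by rewrite cards1 cards0.
by apply: leq_trans (C_fanin2 j); apply: leq_add; apply/subset_leq_card/subsetIl.
Qed.

Lemma restrict_computes (R : Type) (idx : R) (op : Monoid.com_law idx) (xn : X -> R) :
    nonvanishing op xn -> (forall T, T \in Ts -> T :&: I0 != set0) ->
  computes op I Ts C -> computes op I0 [set T :&: I0 | T in Ts] restriction.
Proof.
move=> xn_nonvanishing meets_I0 [C_wf C_val].
have C_acyclic : acyclic C by case: C_wf.
have out_live T : T \in Ts -> live I0 (out C T).
  move=> TTs; apply/negPn/negP => /(gval_mask_dead op xn) dead.
  by apply: (xn_nonvanishing _ (meets_I0 _ TTs)); rewrite -big_mask -C_val.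
split=> [|x U UM /=]; first exact: restrict_wf.
have [T TTs [<- ->]] := restrict_outP UM.
by rewrite restrict_gval ?out_live // -big_mask C_val.
Qed.

End RestrictedCircuit.

Section ChainCircuit.
Variables (X : finType) (I : {set X}) (p0 : X).
Hypothesis p0I : p0 \in I.

Let N := #|X|.

Lemma card_pixels_gt0 : (0 < N)%N.
Proof. by apply/card_gt0P; exists p0. Qed.

Definition prefix (S : {set X}) b := [set p in S :&: I | (enum_rank p <= b)%N].
Definition pixel (S : {set X}) b := [set p in S :&: I | enum_rank p == b :> nat].

Lemma prefix0 S : prefix S 0 = pixel S 0.
Proof. by apply/setP => p; rewrite !inE leqn0. Qed.

Lemma prefixSI S b : prefix S b.+1 :&: prefix S b = prefix S b.
Proof. by apply/setP => p; rewrite !inE; case: (p \in S) (p \in I) => [] [] //=; lia. Qed.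

Lemma prefixSD S b : prefix S b.+1 :\: prefix S b = pixel S b.+1.
Proof. by apply/setP => p; rewrite !inE; case: (p \in S) (p \in I) => [] [] //=; lia. Qed.

Definition chain_ng := (#|{set X}| * N).+1.
Definition chain_set j := nth set0 (enum {set X}) (j %/ N).
Definition chain_pos j := j %% N.

(* Gate a * N + b sums the pixels of rank at most b in the a-th set of pixels
   (intersected with I); the last gate, #|{set X}| * N, is a filler. *)
Definition chain_pin (j : 'I_chain_ng) : {set X} :=
  if prefix (chain_set j) (chain_pos j) == set0 then [set p0]
  else pixel (chain_set j) (chain_pos j).
Definition chain_gin (j : 'I_chain_ng) : {set 'I_chain_ng} :=
  [set i : 'I_chain_ng | [&& 0 < chain_pos j,
                             prefix (chain_set j) (chain_pos j).-1 != set0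
                           & (i : nat) == j.-1]].
Definition chain_out (S : {set X}) : 'I_chain_ng := inord (enum_rank S * N + N.-1).
Definition chain_circuit : circuit X := Circuit chain_pin chain_gin chain_out.

Lemma chain_coords a b : (b < N)%N ->
  chain_set (a * N + b) = nth set0 (enum {set X}) a /\ chain_pos (a * N + b) = b.
Proof.
move=> bN; rewrite /chain_set /chain_pos divnMDl ?card_pixels_gt0 // divn_small //.
by rewrite addn0 modnMDl modn_small.
Qed.

Lemma chain_out_bound (S : {set X}) : (enum_rank S * N + N.-1 < chain_ng)%N.
Proof.
rewrite ltnS; have : (enum_rank S < #|{set X}|)%N := ltn_ord _.
have := card_pixels_gt0; nia.
Qed.

Lemma chain_out_val (S : {set X}) : chain_out S = enum_rank S * N + N.-1 :> nat.
Proof. exact: inordK (chain_out_bound S). Qed.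

Variables (R : Type) (idx : R) (op : Monoid.com_law idx).

Lemma chain_gval (x : X -> R) a b n :
    (b < N)%N -> (a * N + b < chain_ng)%N -> (b < n)%N ->
    prefix (nth set0 (enum {set X}) a) b != set0 ->
  @gval X R idx op chain_circuit x n (inord (a * N + b)) =
    \big[op/idx]_(p in prefix (nth set0 (enum {set X}) a) b) x p.
Proof.
set S := nth _ _ a; elim: b n => [|b IH] [|n] //= bN jN bn nz0;
  rewrite /chain_pin /chain_gin inordK //; case: (chain_coords a bN) => -> ->.
  rewrite (negbTE nz0) [X in op _ X]big1 ?Monoid.mulm1 => [|i]; last by rewrite inE.
  by apply: eq_bigl => p; rewrite !inE leqn0.
rewrite -/S (negbTE nz0) [RHS](big_setID (prefix S b)) prefixSI prefixSD Monoid.mulmC /=.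
have [->|nz] := eqVneq (prefix S b) set0.
  by rewrite big_set0 big1 // => i; rewrite inE.
congr (op _ _); rewrite (eq_bigl (pred1 (inord (a * N + b)))) ?big_pred1_eq ?IH //;
  try lia.
move=> i; rewrite !inE /= -val_eqE /= addnS inordK //.
by move: jN; rewrite /chain_ng; lia.
Qed.

Lemma chain_fanin_pos j : (chain_pin j != set0) || (chain_gin j != set0).
Proof.
rewrite /chain_pin /chain_gin; set S := chain_set j.
have [_|nz] := eqVneq (prefix S (chain_pos j)) set0.
  by apply/orP; left; apply/set0Pn; exists p0; rewrite inE.
have [pix0|//] := eqVneq (pixel S (chain_pos j)) set0.
apply/orP; right; apply/set0Pn; exists (inord j.-1).
rewrite inE inordK ?eqxx ?andbT; last exact: leq_ltn_trans (leq_pred _) (ltn_ord j).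
case: (chain_pos j) nz pix0 => [|b] nz pix0 /=.
  by move: nz; rewrite prefix0 pix0 eqxx.
apply: contraNN nz => /eqP pre0.
by rewrite -(setID (prefix S b.+1) (prefix S b)) prefixSI prefixSD pre0 pix0 setU0.
Qed.

Lemma chain_wf Ts : circuit_wf I Ts chain_circuit.
Proof.
split=> [j|j i|j|S S' _ _|T j _] /=.
- rewrite /chain_pin; case: ifP => _; first by rewrite sub1set.
  by apply/subsetP => p; rewrite !inE => /andP [/andP []].
- rewrite inE => /and3P [pos _ /eqP ->].
  by case: (nat_of_ord j) pos => //; rewrite /chain_pos mod0n.
- exact: chain_fanin_pos.
- move/(congr1 (@nat_of_ord _)); rewrite !chain_out_val => /eqP.
  rewrite eqn_add2r eqn_pmul2r ?card_pixels_gt0 // => /eqP.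
  by move/val_inj/enum_rank_inj.
- rewrite inE; apply/negP => /and3P [pos _ /eqP jm1].
  have j_gt0 : (0 < j)%N by case: (nat_of_ord j) pos => //; rewrite /chain_pos mod0n.
  have := chain_out_val T; have := card_pixels_gt0; rewrite /= jm1 => N_gt0 ej.
  have {}ej : nat_of_ord j = (enum_rank T).+1 * N.
    by move: ej j_gt0; rewrite mulSn; set r := enum_rank T * N; set jj := nat_of_ord j; lia.
  by move: pos; rewrite /chain_pos ej modnMl.
Qed.

Lemma chain_fanin2 : fanin2 chain_circuit.
Proof.
move=> j /=; apply: (@leq_add _ _ 1 1).
  rewrite /chain_pin; case: ifP => _; first by rewrite cards1.
  apply/card_le1_eqP => p q; rewrite !inE => /andP [_ /eqP rp] /andP [_ /eqP rq].
  by apply/enum_rank_inj/val_inj; rewrite /= rp rq.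
apply/card_le1_eqP => u v; rewrite !inE => /and3P [_ _ /eqP ru] /and3P [_ _ /eqP rv].
by apply: val_inj; rewrite /= ru rv.
Qed.

Lemma chain_computes Ts : pattern_set I Ts -> computes op I Ts chain_circuit.
Proof.
case=> _ Ts_pat; split=> [|x T TTs]; first exact: chain_wf.
have [T_nz TI] := Ts_pat T TTs.
have prefixT : prefix T N.-1 = T.
  apply/setP => p; rewrite !inE; case Tp: (p \in T) => //=.
  by rewrite (subsetP TI p Tp) -ltnS prednK ?ltn_ord ?card_pixels_gt0.
have := @chain_gval x (enum_rank T) N.-1 chain_ng.
rewrite nth_enum_rank prefixT; apply=> //.
- by rewrite prednK ?card_pixels_gt0.
- exact: chain_out_bound.
- exact: leq_ltn_trans (leq_addl _ _) (chain_out_bound T).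
Qed.

End ChainCircuit.

Lemma achievable_exists (X : finType) (L : measure) (I : {set X})
    (Ts : {set {set X}}) :
  pattern_set I Ts -> exists k, achievable L I Ts k.
Proof.
move=> Ts_pat; have [/set0Pn [T TTs] pat] := Ts_pat.
have [/set0Pn [p0 Tp0] TI] := pat T TTs; have p0I := subsetP TI p0 Tp0.
have C_or := chain_computes p0I orb Ts_pat; have C_add := chain_computes p0I addn Ts_pat.
have C_fanin2 : fanin2 (chain_circuit I p0) by apply: chain_fanin2.
set C := chain_circuit I p0.
by case: L; [exists (csize C) | exists (csize C) | exists (ng C) | exists (ng C)]; exists C.
Qed.

Lemma restrict_achievable (X : finType) (L : measure) (I I0 : {set X})
    (Ts : {set {set X}}) k :
    pattern_set I0 [set T :&: I0 | T in Ts] -> achievable L I Ts k ->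
  exists2 k', achievable L I0 [set T :&: I0 | T in Ts] k' & (k' <= k)%N.
Proof.
move=> [/set0Pn [U UM] M_pat]; have [/set0Pn [p0 Up0] UI0] := M_pat U UM.
have p0I0 := subsetP UI0 p0 Up0.
have meets_I0 T : T \in Ts -> T :&: I0 != set0.
  by move=> TTs; case: (M_pat _ (imset_f _ TTs)).
have D_or C : computes orb I Ts C ->
    computes orb I0 [set T :&: I0 | T in Ts] (restriction I0 Ts p0 C).
  exact (restrict_computes p0I0 (@nonvanishing_orb X) meets_I0).
have D_add C : computes addn I Ts C ->
    computes addn I0 [set T :&: I0 | T in Ts] (restriction I0 Ts p0 C).
  exact (restrict_computes p0I0 (@nonvanishing_addn X) meets_I0).
case: L => -[C] /=; set D := restriction I0 Ts p0 C.
- case=> C_or <-; exists (csize D); last exact: restrict_csize C_or.1.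
  by exists D; split; first exact: D_or.
- case=> C_add <-; exists (csize D); last exact: restrict_csize C_add.1.
  by exists D; split; first exact: D_add.
- case=> C_or [C_fanin2 <-]; exists (ng C) => //; exists D.
  by split; [exact: D_or | split; first exact: restrict_fanin2].
- case=> C_add [C_fanin2 <-]; exists (ng C) => //; exists D.
  by split; [exact: D_add | split; first exact: restrict_fanin2].
Qed.

Theorem proposition4 (X : finType) (I I0 : {set X}) (Ts : {set {set X}}) :
  pattern_set I Ts -> I0 \subset I ->
  pattern_set I0 [set T :&: I0 | T in Ts] ->
  forall L : measure,
    (cost L I0 [set T :&: I0 | T in Ts] <= cost L I Ts)%N.
Proof.
move=> Ts_pat _ M_pat L; apply: leq_cost (achievable_exists L Ts_pat) _.
by move=> k; apply: restrict_achievable.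
Qed.
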